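(* Let $p\ne q$ be primes and let $T\colon\mathbb{Z}_p\times\mathbb{Z}_q^2\to\mathbb{N}$ be a multiset such that $\chi_{x+y}(T)=0$ for every nonzero $x\in\mathbb{Z}_p$ and every nonzero $y\in\mathbb{Z}_q^2$. For $i\in\mathbb{Z}_p$ define $g_i\colon\mathbb{Z}_q^2\to\mathbb{N}$ by $g_i(z)=T(i+z)$. Then $g_i-g_j$ is a constant function for all $i,j\in\mathbb{Z}_p$.
   Context: An element of $\mathbb{Z}_p\times\mathbb{Z}_q^2$ is written $x+y$ with $x\in\mathbb{Z}_p$, $y\in\mathbb{Z}_q^2$. For $w=x+y$ the character $\chi_w$ is $\chi_w(x'+y')=\exp\big(2\pi i(\tfrac{xx'}{p}+\tfrac{y\cdot y'}{q})\big)$, and for a multiset $T$, $\chi_w(T)=\sum_{z}T(z)\chi_w(z)$. *)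

From HB Require Import structures.
From mathcomp Require Import all_boot all_order all_algebra.
From mathcomp Require Import reals trigo.
From mathcomp Require Import complex.
Set Implicit Arguments. Unset Strict Implicit. Unset Printing Implicit Defensive.
Import Order.TTheory GRing.Theory Num.Theory.
Local Open Scope ring_scope.
Local Open Scope complex_scope.

(* The group Z_p x Z_q^2; an element (x, (y1, y2)) is written x + y in the paper. *)
Definition G (p q : nat) : finType := ('Z_p * ('Z_q * 'Z_q))%type.

Definition expi (R : realType) (t : R) : R[i] := (cos t +i* sin t).

Definition chi (R : realType) (p q : nat) (w z : G p q) : R[i] :=
  let x := (w.1 : nat) in let y1 := (w.2.1 : nat) in let y2 := (w.2.2 : nat) in
  let x' := (z.1 : nat) in let y1' := (z.2.1 : nat) in let y2' := (z.2.2 : nat) in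
  expi (2 * pi * ((x * x')%:R / p%:R + (y1 * y1' + y2 * y2')%:R / q%:R)).

Definition chiT (R : realType) (p q : nat) (w : G p q) (T : G p q -> nat) : R[i] :=
  \sum_(z : G p q) (T z)%:R * chi R w z.

Definition slice (p q : nat) (T : G p q -> nat) (i : 'Z_p) (z : 'Z_q * 'Z_q) : nat :=
  T (i, z).

(* Write g_k^(y) = sum_v g_k(v) w_q^(y.v) for the Fourier transform of the slice g_k over
   Z_q^2. Splitting the sum defining chi_(x+y)(T) along Z_p gives
   chi_(x+y)(T) = sum_k w_p^(xk) g_k^(y). For fixed y <> 0 the hypothesis says that the
   Fourier transform over Z_p of k |-> g_k^(y) vanishes at every x <> 0, so by Fourier
   inversion g_k^(y) does not depend on k. Hence the transform of g_i - g_j vanishes at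
   every y <> 0, and inversion over Z_q^2 shows that g_i - g_j is constant.
   Both inversions are instances of one fact about a kernel K with a left inverse K'
   (up to a regular scalar N) whose row x0 is constantly 1. *)

From HB Require Import structures.
From mathcomp Require Import all_boot all_order all_algebra.
From mathcomp Require Import reals trigo complex.
From mathcomp Require Import zify lra.
Set Implicit Arguments. Unset Strict Implicit. Unset Printing Implicit Defensive.
Import Order.TTheory GRing.Theory Num.Theory.
Local Open Scope ring_scope.

Section Biorthogonal.
Variable R : comNzRingType.

Definition biorthogonal (I : finType) (K K' : I -> I -> R) (N : R) :=
  forall i j, \sum_x K' x j * K x i = N * (i == j)%:R.

Lemma biorthogonalM (I J : finType) (K K' : I -> I -> R) (L L' : J -> J -> R) (N M : R) :
  biorthogonal K K' N -> biorthogonal L L' M ->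
  biorthogonal (fun x i : I * J => K x.1 i.1 * L x.2 i.2)
               (fun x j : I * J => K' x.1 j.1 * L' x.2 j.2) (N * M).
Proof.
move=> hK hL [i1 i2] [j1 j2] /=.
rewrite -(pair_bigA _ (fun x1 x2 => K' x1 j1 * L' x2 j2 * (K x1 i1 * L x2 i2))) /=.
rewrite (eq_bigr (fun x1 => \sum_x2 (K' x1 j1 * K x1 i1) * (L' x2 j2 * L x2 i2))).
  by rewrite -big_distrlr /= hK hL xpair_eqE -mulnb natrM mulrACA.
by move=> x1 _; apply: eq_bigr => x2 _; rewrite mulrACA.
Qed.

Lemma biorthogonal_const (I : finType) (K K' : I -> I -> R) (N : R) (x0 : I)
    (f : I -> R) :
  biorthogonal K K' N -> GRing.lreg N ->
  (forall i, K x0 i = 1) -> (forall j, K' x0 j = 1) ->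
  (forall x, x != x0 -> \sum_i K x i * f i = 0) ->
  forall j k, f j = f k.
Proof.
move=> hKK' hN hK hK' hf.
have inversion j : \sum_x K' x j * (\sum_i K x i * f i) = N * f j.
  rewrite (eq_bigr (fun x => \sum_i K' x j * K x i * f i)); last first.
    by move=> x _; rewrite mulr_sumr; apply: eq_bigr => i _; rewrite mulrA.
  rewrite exchange_big /= (eq_bigr (fun i => N * (i == j)%:R * f i)); last first.
    by move=> i _; rewrite -mulr_suml hKK'.
  rewrite (bigD1 j) //= eqxx mulr1 big1 ?addr0 // => i /negPf->.
  by rewrite mulr0 mul0r.
have trivial_term j : \sum_x K' x j * (\sum_i K x i * f i) = \sum_i f i.
  rewrite (bigD1 x0) //= [X in _ + X]big1 => [|x hx]; last by rewrite hf ?mulr0.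
  by rewrite addr0 hK' mul1r; apply: eq_bigr => i _; rewrite hK mul1r.
by move=> j k; apply: hN; rewrite -!inversion !trivial_term.
Qed.

End Biorthogonal.

Lemma dvdn_addn_subn (n i j : nat) :
  (i < n)%N -> (j < n)%N -> (n %| i + (n - j))%N = (i == j).
Proof.
move=> lt_in lt_jn; apply/idP/eqP => [/dvdnP [c def_n] | ->].
  by case: c def_n => [|[|c]]; rewrite ?mulSn; lia.
by rewrite subnKC ?dvdnn // ltnW.
Qed.

Section PrimitiveRootSums.
Variables (R : idomainType) (n : nat) (z : R).
Hypothesis prim_z : n.-primitive_root z.

Lemma sum_prim_root_exprM k :
  \sum_(x < n) z ^+ (x * k) = if (n %| k)%N then n%:R else 0.
Proof.
have zn1 := prim_expr_order prim_z.
case: ifP => [/dvdnP [c ->] | n_ndvd_k].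
  rewrite (eq_bigr (fun _ => 1)) ?sumr_const ?card_ord // => x _.
  by rewrite mulnA mulnC exprM zn1 expr1n.
have zk_neq1 : z ^+ k != 1 by rewrite -(prim_order_dvd prim_z) n_ndvd_k.
have : (z ^+ k - 1) * \sum_(x < n) z ^+ (x * k) = 0.
  rewrite (eq_bigr (fun x : 'I_n => (z ^+ k) ^+ x)) => [|x _]; last first.
    by rewrite mulnC exprM.
  by rewrite -subrX1 -exprM mulnC exprM zn1 expr1n subrr.
by move/eqP; rewrite mulf_eq0 subr_eq0 (negPf zk_neq1) => /eqP.
Qed.

Lemma biorthogonal_prim_root :
  biorthogonal (fun x i : 'I_n => z ^+ (x * i)) (fun x j : 'I_n => z ^+ (x * (n - j)))
    n%:R.
Proof.
move=> i j; rewrite (eq_bigr (fun x : 'I_n => z ^+ (x * (i + (n - j))))) => [|x _].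
  rewrite sum_prim_root_exprM dvdn_addn_subn // val_eqE.
  by case: (i == j); rewrite /= ?mulr1 ?mulr0.
by rewrite -exprD -mulnDr addnC.
Qed.

End PrimitiveRootSums.

Section ComplexExponential.
Variable R : realType.
Local Open Scope complex_scope.

Lemma expiD (a b : R) : expi (a + b) = expi a * expi b.
Proof.
rewrite /expi cosD sinD; apply/eqP.
by rewrite eq_complex /= [cos a * sin b + _]addrC !eqxx.
Qed.

Lemma expiMn (t : R) n : expi (n%:R * t) = expi t ^+ n.
Proof.
elim: n => [|n IHn]; first by rewrite mul0r /expi cos0 sin0.
by rewrite mulrSr mulrDl mul1r expiD IHn exprSr.
Qed.

Lemma expi_2pi : expi (2 * pi : R) = 1.
Proof. by rewrite /expi mulr_natl cos2pi sin2pi. Qed.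

Lemma cos_neq1 (t : R) : 0 < t < 2 * pi -> cos t != 1.
Proof.
move=> t_range; apply/eqP => cos_t.
have sin_half_gt0 : 0 < sin (t / 2) by apply: sin_gt0_pi; lra.
have := cos_mulr2n (t / 2); rewrite mulr2n -splitr cos_t => cos_half.
have := sin2cos2 (t / 2); rewrite mulr2n in cos_half; nra.
Qed.

Definition omega (n : nat) : R[i] := expi (2 * pi / n%:R).

Lemma expi_2pi_frac a n : expi (2 * pi * (a%:R / n%:R)) = omega n ^+ a.
Proof. by rewrite /omega -expiMn mulrCA. Qed.

Lemma prim_root_omega n : (0 < n)%N -> n.-primitive_root (omega n).
Proof.
move=> n_gt0; have n_pos : (0 : R) < n%:R by rewrite ltr0n.
apply/andP; split=> //; apply/forallP=> k; rewrite unity_rootE -expi_2pi_frac.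
have := ltn_ord k; rewrite leq_eqVlt => /orP[/eqP-> | lt_kn].
  by rewrite divff ?mulr1 ?expi_2pi ?eqxx // gt_eqF.
rewrite ltn_eqF // eqbF_neg eq_complex /= negb_and; apply/orP; left.
have two_pi_gt0 : (0 : R) < 2 * pi by rewrite mulr_gt0 ?pi_gt0.
apply: cos_neq1; rewrite mulr_gt0 ?divr_gt0 ?ltr0n //=.
by rewrite gtr_pMr // ltr_pdivrMr // mul1r ltr_nat.
Qed.

End ComplexExponential.

Lemma Zp_prim_root_omega (R : realType) n :
  (1 < n)%N -> (Zp_trunc n).+2.-primitive_root (omega R n).
Proof. by move=> n_gt1; rewrite Zp_cast //; apply: prim_root_omega; lia. Qed.

Definition slice_fourier (R : realType) (p q : nat) (T : G p q -> nat)
    (y : 'Z_q * 'Z_q) (k : 'Z_p) : R[i] :=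
  \sum_(v : 'Z_q * 'Z_q) (slice T k v)%:R * omega R q ^+ (y.1 * v.1 + y.2 * v.2).

Section Slices.
Variables (R : realType) (p q : nat) (T : G p q -> nat).

Lemma chiE (x k : 'Z_p) (y v : 'Z_q * 'Z_q) :
  chi R (x, y) (k, v) = omega R p ^+ (x * k) * omega R q ^+ (y.1 * v.1 + y.2 * v.2).
Proof. by rewrite /chi /= mulrDr expiD !expi_2pi_frac. Qed.

Lemma chiT_slice_fourier (x : 'Z_p) (y : 'Z_q * 'Z_q) :
  chiT R (x, y) T = \sum_(k : 'Z_p) omega R p ^+ (x * k) * slice_fourier R T y k.
Proof.
transitivity (\sum_(k : 'Z_p) \sum_(v : 'Z_q * 'Z_q) (T (k, v))%:R * chi R (x, y) (k, v)).
  by rewrite pair_bigA; apply: eq_bigr => -[].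
apply: eq_bigr => k _; rewrite mulr_sumr; apply: eq_bigr => v _.
by rewrite chiE mulrCA.
Qed.

Hypotheses (p_gt1 : (1 < p)%N) (q_gt1 : (1 < q)%N).
Hypothesis chiT_eq0 : forall (x : 'Z_p) (y : 'Z_q * 'Z_q),
  x != 0 -> y != (0, 0) -> chiT R (x, y) T = 0.

Lemma slice_fourier_indep (y : 'Z_q * 'Z_q) (k k' : 'Z_p) :
  y != (0, 0) -> slice_fourier R T y k = slice_fourier R T y k'.
Proof.
move=> y_neq0; have prim_p := Zp_prim_root_omega R p_gt1.
apply: (biorthogonal_const (biorthogonal_prim_root prim_p) (x0 := 0)).
- exact/mulfI/(prim_root_natf_neq0 prim_p).
- by move=> i; rewrite mul0n expr0.
- by move=> j; rewrite mul0n expr0.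
- by move=> x x_neq0; rewrite -chiT_slice_fourier chiT_eq0.
Qed.

Lemma slice_sub_const (i j : 'Z_p) (v : 'Z_q * 'Z_q) :
  (slice T i v)%:R - (slice T j v)%:R =
  (slice T i (0, 0))%:R - (slice T j (0, 0))%:R :> R[i].
Proof.
have prim_q := Zp_prim_root_omega R q_gt1.
apply: (biorthogonal_const (biorthogonalM (biorthogonal_prim_root prim_q)
                                          (biorthogonal_prim_root prim_q)) (x0 := (0, 0))
  (f := fun u => (slice T i u)%:R - (slice T j u)%:R)).
- by apply/lregM; apply/mulfI/(prim_root_natf_neq0 prim_q).
- by move=> u; rewrite !mul0n expr0 mulr1.
- by move=> u; rewrite !mul0n expr0 mulr1.
- move=> y y_neq0; rewrite -[RHS](subrr (slice_fourier R T y i)).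
  rewrite {2}(slice_fourier_indep i j y_neq0) -sumrB; apply: eq_bigr => u _.
  by rewrite -exprD mulrBr mulrC [_ * (slice T j u)%:R]mulrC.
Qed.

End Slices.

Theorem proposition4p2 (R : realType) (p q : nat)
  (hp : prime p) (hq : prime q) (hpq : p <> q) (T : G p q -> nat)
  (hT : forall (x : 'Z_p) (y : 'Z_q * 'Z_q),
      x != 0 -> y != (0, 0) -> chiT R (x, y) T = 0) :
  forall i j : 'Z_p, exists c : int,
    forall z : 'Z_q * 'Z_q, (slice T i z)%:Z - (slice T j z)%:Z = c.
Proof.
move=> i j; exists ((slice T i (0, 0))%:Z - (slice T j (0, 0))%:Z) => v.
apply: (@intr_inj R[i]); rewrite !intrB.
exact: (slice_sub_const (prime_gt1 hp) (prime_gt1 hq) hT).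
Qed.
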